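(* Let $G$ be a connected triangle-free graph with no full star-cutset. Then $G$ has no cut-vertex of degree at least three. Moreover, if $G$ is not a path with at most $4$ vertices, then $G$ has minimum degree at least $2$.
   Context: A full star-cutset of a connected graph $G$ is a set $N[u]=\{u\}\cup N(u)$ whose removal disconnects $G$. *)

(* A finite simple graph is a symmetric irreflexive
   relation e on a finType T (vertex set = T). *)
From mathcomp Require Import all_boot.
Set Implicit Arguments. Unset Strict Implicit. Unset Printing Implicit Defensive.

Section Graphs.
Variables (T : finType) (e : rel T).

Definition induced_rel (S : {set T}) : rel T :=
  [rel x y | [&& e x y, x \in S & y \in S]].

Definition connected_on (S : {set T}) : Prop :=
  S != set0 /\ forall x y, x \in S -> y \in S -> connect (induced_rel S) x y.

Definition connected_graph : Prop := connected_on [set: T].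

(* removal of X disconnects G: two remaining vertices are not joined by a
   path in G - X (so G - X is nonempty and not connected) *)
Definition disconnects (X : {set T}) : Prop :=
  exists x y, [/\ x \notin X, y \notin X & ~~ connect (induced_rel (~: X)) x y].

Definition closed_nbhd (u : T) : {set T} := u |: [set v | e u v].

Definition full_star_cutset (X : {set T}) : Prop :=
  exists u, X = closed_nbhd u /\ disconnects X.

Definition has_full_star_cutset : Prop := exists X, full_star_cutset X.

Definition triangle_free : Prop := forall x y z, ~ [&& e x y, e y z & e x z].

Definition deg (v : T) : nat := #|[set w | e v w]|.

Definition cut_vertex (v : T) : Prop := disconnects [set v].

Definition is_path_graph (n : nat) : Prop :=
  exists f : 'I_n -> T, bijective f /\
    forall i j : 'I_n, e (f i) (f j) = ((i.+1 == j :> nat) || (j.+1 == i :> nat)).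

End Graphs.

(* Let [G] have no full star-cutset, so that [G - N[a]] is connected for every
   vertex [a].  If a cut-vertex [v] had three neighbours [a], [b], [c], they
   would be pairwise non-adjacent; then [b] and [c] are joined in
   [G - N[a] <= G - v], likewise [a] and [c], and every vertex of [G - v] lies in
   [N[a]] or is joined to [b] outside [N[a]]: so [G - v] is connected.
   For a vertex [v] of degree one with neighbour [u] and a second neighbour
   [w] of [u], the component of [v] in [G - N[w]] is [{v}], so every vertex
   other than [v] lies in [N[w]]; triangle-freeness then pins down the
   neighbourhoods, and one more star-cutset [N[z]] at a further neighbour [z]
   of [w] shows that there is no fifth vertex. *)
From mathcomp Require Import all_boot.
Set Implicit Arguments. Unset Strict Implicit. Unset Printing Implicit Defensive.

Lemma connect_stable (T : finType) (r : rel T) (A : pred T) x y :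
  (forall a b, a \in A -> r a b -> b \in A) ->
  x \in A -> connect r x y -> y \in A.
Proof.
move=> stA xA /connectP [p]; elim: p x xA => [|z p IHp] x xA /=; first by move=> _ ->.
by case/andP => rxz pz; apply: IHp (stA _ _ xA rxz) pz.
Qed.

Section Graphs.
Variables (T : finType) (e : rel T).
Hypotheses (e_sym : symmetric e) (e_irr : irreflexive e).

Local Notation connect_in S := (connect (induced_rel e S)).

Lemma in_closed_nbhd a x : (x \in closed_nbhd e a) = (x == a) || e a x.
Proof. by rewrite !inE. Qed.

Lemma induced_rel_sym S : symmetric (induced_rel e S).
Proof. by move=> x y; rewrite /induced_rel /= e_sym [(x \in S) && _]andbC. Qed.

Lemma connect_induced_sym S x y : connect_in S x y = connect_in S y x.
Proof. exact/sym_connect_sym/induced_rel_sym. Qed.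

Lemma connect_induced_subset (S S' : {set T}) x y : S \subset S' ->
  connect_in S x y -> connect_in S' x y.
Proof.
move=> sSS'; apply: connect_sub => a b /and3P [eab aS bS].
by apply: connect1; rewrite /induced_rel /= eab !(subsetP sSS').
Qed.

Lemma connected_graph_connect : connected_graph e -> forall x y, connect e x y.
Proof.
case=> _ conn x y; rewrite -(@eq_connect _ (induced_rel e [set: T])).
  exact: conn (in_setT x) (in_setT y).
by move=> a b; rewrite /induced_rel /= !inE !andbT.
Qed.

Lemma connect_outside_closed_nbhd a x y : ~ has_full_star_cutset e ->
  x \notin closed_nbhd e a -> y \notin closed_nbhd e a ->
  connect_in (~: closed_nbhd e a) x y.
Proof.
move=> noFSC xN yN; apply/negPn/negP => nxy.
by apply: noFSC; exists (closed_nbhd e a), a; split=> //; exists x, y.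
Qed.

Lemma path_graph_of_seq (s : seq T) (x0 : T) :
  uniq s -> (forall x, x \in s) ->
  (forall i j, i < size s -> j < size s ->
     e (nth x0 s i) (nth x0 s j) = (i.+1 == j) || (j.+1 == i)) ->
  is_path_graph e (size s).
Proof.
move=> s_uniq s_all s_edges.
exists (fun i : 'I_(size s) => nth x0 s i); split; last by move=> i j; apply: s_edges.
apply: inj_card_bij.
  by move=> i j /eqP; rewrite nth_uniq // => /eqP; apply: val_inj.
rewrite card_ord; apply: leq_trans (card_size s).
by apply: subset_leq_card; apply/subsetP => x _; apply: s_all.
Qed.

Hypotheses (Gtf : triangle_free e) (noFSC : ~ has_full_star_cutset e).

Lemma cut_vertex_deg_lt3 v : cut_vertex e v -> deg e v < 3.
Proof.
case=> [x0 [y0 [x0v y0v nx0y0]]]; rewrite ltnNge; apply/negP.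
case/card_gt2P => [a [b [c [[va vb vc] [ab bc ca]]]]].
move: va vb vc; rewrite !inE => eva evb evc.
have notv x : e v x -> x \in ~: [set v].
  by rewrite !inE; apply: contraTneq => ->; rewrite e_irr.
have join_outside a' x y : e v a' -> x \notin closed_nbhd e a' ->
    y \notin closed_nbhd e a' -> connect_in (~: [set v]) x y.
  move=> eva' xN yN; apply: connect_induced_subset (connect_outside_closed_nbhd noFSC xN yN).
  by rewrite setCS sub1set in_closed_nbhd e_sym eva' orbT.
have nbr_out a' b' : e v a' -> e v b' -> a' != b' -> b' \notin closed_nbhd e a'.
  move=> eva' evb' a'b'; rewrite in_closed_nbhd negb_or eq_sym a'b'.
  by apply/negP => ea'b'; apply: (@Gtf a' v b'); rewrite [e a' v]e_sym eva' evb' ea'b'.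
have join_bc : connect_in (~: [set v]) b c.
  by apply: (join_outside a) => //; apply: nbr_out; rewrite // eq_sym.
have join_ac : connect_in (~: [set v]) a c.
  by apply: (join_outside b) => //; apply: nbr_out; rewrite // eq_sym.
have join_a y : y \in ~: [set v] -> connect_in (~: [set v]) a y.
  move=> yv; case: (boolP (y \in closed_nbhd e a)) => [|yN].
    rewrite in_closed_nbhd => /orP [/eqP ->|eay]; first exact: connect0.
    by rewrite connect1 // /induced_rel /= eay notv.
  apply: connect_trans join_ac _; rewrite connect_induced_sym in join_bc.
  exact: connect_trans join_bc (join_outside _ _ _ eva (nbr_out _ _ eva evb ab) yN).
move/negP: nx0y0; apply; apply: connect_trans (join_a _ _); last by rewrite inE.
by rewrite connect_induced_sym join_a // inE.
Qed.

Hypothesis Gconn : connected_graph e.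

Lemma isolated_path_graph v : deg e v = 0 -> is_path_graph e 1.
Proof.
move/cards0_eq => Nv.
have all_v x : x = v.
  apply/eqP; apply: (connect_stable (A := pred1 v)) (connected_graph_connect Gconn v x).
    by move=> a b /eqP -> evb; have := in_set0 b; rewrite -Nv inE evb.
  by rewrite inE.
apply: (path_graph_of_seq (s := [:: v]) (x0 := v)) => // [x|[|i] [|j] //=].
by rewrite (all_v x) inE.
Qed.

Section Leaf.
Variables v u : T.
Hypothesis e_v : forall y, e v y = (y == u).

Let evu : e v u. Proof. by rewrite e_v. Qed.
Let euv : e u v. Proof. by rewrite e_sym. Qed.
Let uv : u != v. Proof. by apply: contraTneq evu => ->; rewrite e_irr. Qed.

Lemma leaf_path_graph2 : (forall w, e u w -> w = v) -> is_path_graph e 2.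
Proof.
move=> e_u.
have all_vu x : x \in [:: v; u].
  apply: (connect_stable _ _ (connected_graph_connect Gconn v x)); last by rewrite inE eqxx.
  move=> a b; rewrite !inE => /orP [] /eqP ->; first by rewrite e_v => ->; rewrite orbT.
  by move/e_u ->; rewrite eqxx.
apply: (path_graph_of_seq (s := [:: v; u]) (x0 := v)) => //; first by rewrite /= inE eq_sym uv.
by move=> [|[|i]] [|[|j]] //=; rewrite ?e_irr.
Qed.

Variable w : T.
Hypotheses (euw : e u w) (wv : w != v).

Let ewu : e w u. Proof. by rewrite e_sym. Qed.
Let wu : w != u. Proof. by apply: contraTneq euw => ->; rewrite e_irr. Qed.
Let evw : e v w = false. Proof. by rewrite e_v (negbTE wu). Qed.
Let ewv : e w v = false. Proof. by rewrite e_sym. Qed.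

(* In [G - N[w]] the vertex [v] is isolated, as its only neighbour [u] is in [N[w]]. *)
Lemma leaf_closed_nbhd_cover x : x != v -> x \in closed_nbhd e w.
Proof.
move=> xv; apply/negPn/negP => xN.
have vN : v \notin closed_nbhd e w by rewrite in_closed_nbhd negb_or eq_sym wv ewv.
move/negP: xv; apply.
apply: (connect_stable (A := pred1 v) _ _ (connect_outside_closed_nbhd noFSC vN xN)).
  move=> a b /eqP -> /and3P []; rewrite e_v => /eqP -> _.
  by rewrite !inE ewu orbT.
by rewrite inE.
Qed.

Lemma leaf_nbr_nbr x : e u x -> (x == v) || (x == w).
Proof.
move=> eux; case: (eqVneq x v) => //= xv.
move: (leaf_closed_nbhd_cover xv); rewrite in_closed_nbhd => /orP [-> //| ewx].
by exfalso; apply: (@Gtf u w x); rewrite euw ewx eux.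
Qed.

Lemma leaf_path_graph3 : (forall z, z \in [:: v; u; w]) -> is_path_graph e 3.
Proof.
move=> all_vuw; apply: (path_graph_of_seq (s := [:: v; u; w]) (x0 := v)) => //.
  by rewrite /= !inE !negb_or !(eq_sym v) (eq_sym u w) uv wv wu.
by move=> [|[|[|i]]] [|[|[|j]]] //=; rewrite ?e_irr ?evw ?ewv.
Qed.

Variable z : T.
Hypothesis z_new : z \notin [:: v; u; w].

Let zv : z != v. Proof. by move: z_new; rewrite !inE !negb_or => /and3P []. Qed.
Let zu : z != u. Proof. by move: z_new; rewrite !inE !negb_or => /and3P []. Qed.
Let zw : z != w. Proof. by move: z_new; rewrite !inE !negb_or => /and3P []. Qed.
Let ewz : e w z.
Proof. by have := leaf_closed_nbhd_cover zv; rewrite in_closed_nbhd (negbTE zw). Qed.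
Let ezw : e z w. Proof. by rewrite e_sym. Qed.
Let euz : e u z = false.
Proof. by apply/negP => /leaf_nbr_nbr; rewrite (negbTE zv) (negbTE zw). Qed.
Let ezu : e z u = false. Proof. by rewrite e_sym. Qed.
Let evz : e v z = false. Proof. by rewrite e_v (negbTE zu). Qed.
Let ezv : e z v = false. Proof. by rewrite e_sym. Qed.

Lemma leaf_far_nbr y : e z y -> y = w.
Proof.
move=> ezy; apply/eqP; case: (eqVneq y w) => // yw.
have yv : y != v by apply: contraTneq ezy => ->; rewrite ezv.
move: (leaf_closed_nbhd_cover yv); rewrite in_closed_nbhd (negbTE yw) /= => ewy.
by exfalso; apply: (@Gtf w z y); rewrite ewz ezy ewy.
Qed.

(* The component of [v] in [G - N[z]] is [{v, u}]. *)
Lemma leaf_path_graph4 : is_path_graph e 4.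
Proof.
have all_vuwz x : x \in [:: v; u; w; z].
  rewrite !inE; apply/negPn/negP; rewrite !negb_or => /and4P [xv xu xw xz].
  have vN : v \notin closed_nbhd e z by rewrite in_closed_nbhd negb_or eq_sym zv ezv.
  have xN : x \notin closed_nbhd e z.
    by rewrite in_closed_nbhd negb_or xz; apply: contra xw => /leaf_far_nbr ->.
  have : x \in [:: v; u].
    have := connect_outside_closed_nbhd noFSC vN xN.
    apply: (connect_stable (A := mem [:: v; u])).
      move=> a b; rewrite !inE => /orP [] /eqP -> /and3P [eab _ bN].
        by move: eab; rewrite e_v => ->; rewrite orbT.
      case/orP: (leaf_nbr_nbr eab) => /eqP E; first by rewrite E eqxx.
      by move: bN; rewrite E !inE ezw orbT.
    by rewrite inE eqxx.
  by rewrite !inE (negbTE xv) (negbTE xu).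
apply: (path_graph_of_seq (s := [:: v; u; w; z]) (x0 := v)) => //.
  by rewrite /= !inE !negb_or !(eq_sym v) (eq_sym u w) (eq_sym u z) (eq_sym w z) uv wv wu zv zu zw.
by move=> [|[|[|[|i]]]] [|[|[|[|j]]]] //=; rewrite ?e_irr ?evw ?ewv ?evz ?ezv ?euz ?ezu.
Qed.

End Leaf.

Lemma leaf_path_graph v : deg e v = 1 -> exists n, n <= 4 /\ is_path_graph e n.
Proof.
move/eqP/cards1P => [u Nv].
have e_v y : e v y = (y == u) by rewrite -in_set1 -Nv inE.
case: (boolP [exists w, e u w && (w != v)]) => [/existsP [w /andP [euw wv]]|]; last first.
  rewrite negb_exists => /forallP no_w; exists 2; split=> //; apply: (leaf_path_graph2 e_v).
  by move=> w euw; apply/eqP; have := no_w w; rewrite euw negbK.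
case: (boolP [exists z, z \notin [:: v; u; w]]) => [/existsP [z z_new]|]; last first.
  rewrite negb_exists => /forallP all_vuw; exists 3; split=> //.
  by apply: (leaf_path_graph3 e_v euw wv) => z; have := all_vuw z; rewrite negbK.
by exists 4; split=> //; apply: (leaf_path_graph4 e_v euw wv z_new).
Qed.

End Graphs.

Theorem mainTheorem17 (T : finType) (e : rel T)
  (e_sym : symmetric e) (e_irr : irreflexive e)
  (Gconn : connected_graph e) (Gtf : triangle_free e)
  (Gnfsc : ~ has_full_star_cutset e) :
  (forall v : T, cut_vertex e v -> deg e v < 3) /\
  ((~ exists n, n <= 4 /\ is_path_graph e n) -> forall v : T, 2 <= deg e v).
Proof.
split=> [|not_short_path v]; first exact: cut_vertex_deg_lt3.
rewrite leqNgt; apply/negP; rewrite ltnS leq_eqVlt ltnS leqn0 => /orP [/eqP deg1 | /eqP deg0].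
  by apply: not_short_path; apply: (leaf_path_graph e_sym e_irr Gtf Gnfsc Gconn deg1).
by apply: not_short_path; exists 1; split=> //; apply: (isolated_path_graph e_irr Gconn deg0).
Qed.
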